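(* Let $(\mathcal{A}_\Lambda,\partial_\Lambda)$ be a filtered Chekanov–Eliashberg DGA over $\mathbb{Z}_2$ with generators $q_1,\dots,q_n$, let $\epsilon$ be an augmentation, and let $\bar\phi:\mathcal{A}_\Lambda\to\mathcal{A}_\Lambda$ be a tame isomorphism. If $\bar\phi$ is semimonotonic, then $(A_\Lambda^\bullet,\ \bar\phi_1^\epsilon\circ\partial_1^\epsilon\circ(\bar\phi_1^\epsilon)^{-1})$ is a well-defined persistence module of chain complexes, and $\bar\phi_1^\epsilon$ induces an isomorphism of persistence modules of chain complexes \[ \phi_1^{\epsilon,\bullet}:(A_\Lambda^\bullet,\partial_1^\epsilon)\to(A_\Lambda^\bullet,\ \bar\phi_1^\epsilon\circ\partial_1^\epsilon\circ(\bar\phi_1^\epsilon)^{-1}). \]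
   Context: A filtered Chekanov–Eliashberg DGA is a Chekanov–Eliashberg DGA $(\mathcal{A}_\Lambda,\partial_\Lambda)$ (free noncommutative graded algebra over $\mathbb{Z}_2$ on generators $q_1,\dots,q_n$) together with heights $h(q_i)>0$, extended by $h(\text{word})=$ sum of heights of its letters and $h(\text{sum})=$ max over nonzero terms, such that $\partial_\Lambda$ strictly decreases height. An augmentation is an algebra map $\epsilon:\mathcal{A}_\Lambda\to\mathbb{Z}_2$ vanishing on nonzero degrees with $\epsilon\circ\partial_\Lambda=0$; $\partial_1^\epsilon$ is the linearized differential on the vector space $A_\Lambda$ with basis $q_1,\dots,q_n$ (the length-one part of $\phi^\epsilon\partial_\Lambda(\phi^\epsilon)^{-1}$, where $\phi^\epsilon(q_i)=q_i+\epsilon(q_i)$). $A_\Lambda^\bullet$ is the persistence module with $A^t_\Lambda$ spanned by generators of height $\le t$. An elementary automorphism is a chain map of the form $q_j\mapsto q_j+u$, $q_i\mapsto q_i$ ($i\ne j$), with $u$ in the subalgebra generated by the $q_i$, $i\neq j$; it is semimonotonic if $u$ is a (sum of) word(s) in generators of height strictly less than $h(q_j)$. A tame isomorphism is a composition of elementary automorphisms (possibly followed by a relabeling isomorphism); it is semimonotonic if these elementary automorphisms can be taken semimonotonic. For an elementary automorphism $q\mapsto q+q_{i_1}\cdots q_{i_k}$ the induced linear map is $\bar\phi_1^\epsilon(q)=q+\sum_{\ell=1}^k\big(\prod_{m\neq\ell}\epsilon(q_{i_m})\big)q_{i_\ell}$ (identity on other generators, extended additively in $u$), and for a composition one composes the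 induced linear maps.
   Formalization: The final relabeling sends each generator to one of equal height, and in the composed map each later elementary automorphism is linearized at ε composed with the inverse of the earlier ones. Apart from conventions, each condition added here is assumed in the paper as well or is needed for the statement above to hold. *)

From HB Require Import structures.
From mathcomp Require Import all_boot all_order all_fingroup all_algebra.
Set Implicit Arguments.
Unset Strict Implicit.
Unset Printing Implicit Defensive.
Import Order.TTheory GRing.Theory Num.Theory.
Local Open Scope ring_scope.

(* The free noncommutative algebra Z_2<q_1,...,q_n>.                  *)
(* Generator q_i is encoded by i : 'I_n.  A word is a seq of letters; *)
(* an element of the algebra is a finite formal sum of words, encoded *)
(* as a seq of words; the Z_2-coefficient of a word w is the parity   *)
(* of its multiplicity.  Two encodings are equal in the algebra iff   *)
(* they have the same coefficients ([peq]).                           *)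
Section FreeAlg.
Variable n : nat.

Definition word := seq 'I_n.
Definition ncpoly := seq word.

Definition coef (p : ncpoly) (w : word) : bool := odd (count_mem w p).
Definition peq (p q : ncpoly) : Prop := forall w, coef p w = coef q w.

Definition pzero : ncpoly := [::].
Definition pone : ncpoly := [:: [::]].
Definition pgen (i : 'I_n) : ncpoly := [:: [:: i]].
Definition padd (p q : ncpoly) : ncpoly := p ++ q.
Definition pmul (p q : ncpoly) : ncpoly := [seq u ++ v | u <- p, v <- q].

Definition subst_word (f : 'I_n -> ncpoly) (w : word) : ncpoly :=
  foldr (fun i acc => pmul (f i) acc) pone w.
Definition subst (f : 'I_n -> ncpoly) (p : ncpoly) : ncpoly :=
  flatten (map (subst_word f) p).

(* derivation (Leibniz rule, no signs over Z_2) determined by d i = ∂ q_i *)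
Fixpoint deriv_word (d : 'I_n -> ncpoly) (w : word) : ncpoly :=
  match w with
  | [::] => pzero
  | i :: w' => padd (pmul (d i) [:: w']) (pmul (pgen i) (deriv_word d w'))
  end.
Definition deriv (d : 'I_n -> ncpoly) (p : ncpoly) : ncpoly :=
  flatten (map (deriv_word d) p).

(* ---------------- grading (in Z, or in Z/N when N > 0) ------------- *)
Definition wdeg (deg : 'I_n -> int) (w : word) : int := \sum_(i <- w) deg i.
Definition homog (N : nat) (deg : 'I_n -> int) (k : int) (p : ncpoly) : Prop :=
  forall w, coef p w -> (wdeg deg w == k %[mod N%:Z])%Z.

(* Chekanov-Eliashberg DGA (as an abstract semi-free DGA over Z_2):
   ∂ has degree -1 and ∂ ∘ ∂ = 0. *)
Definition is_DGA (N : nat) (deg : 'I_n -> int) (d : 'I_n -> ncpoly) : Prop :=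
  (forall i, homog N deg (deg i - 1) (d i)) /\
  (forall p, peq (deriv d (deriv d p)) pzero).

Definition hword (R : realFieldType) (h : 'I_n -> R) (w : word) : R :=
  \sum_(i <- w) h i.

(* heights positive, and ∂ strictly decreases height:
   h(∂x) < h(x) whenever ∂x <> 0, where h(sum) = max over nonzero terms *)
Definition is_filtered (R : realFieldType) (h : 'I_n -> R) (d : 'I_n -> ncpoly)
  : Prop :=
  (forall i, 0 < h i) /\
  (forall p w, coef (deriv d p) w ->
     exists2 w', coef p w' & hword h w < hword h w').

(* the algebra map eps : A -> Z_2 with eps(q_i) = eps i *)
Definition aug (eps : 'I_n -> bool) (p : ncpoly) : bool :=
  odd (count (fun w => all eps w) p).

Definition is_augmentation (N : nat) (deg : 'I_n -> int) (d : 'I_n -> ncpoly)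
  (eps : 'I_n -> bool) : Prop :=
  (forall i, eps i -> (deg i == 0 %[mod N%:Z])%Z) /\
  (forall p, aug eps (deriv d p) = false).

(* phi^eps (q_i) = q_i + eps(q_i); its inverse q_i |-> q_i - eps(q_i),
   which over Z_2 is q_i + eps(q_i) *)
Definition phi_eps (eps : 'I_n -> bool) (i : 'I_n) : ncpoly :=
  padd (pgen i) (if eps i then pone else pzero).
Definition phi_eps_inv (eps : 'I_n -> bool) (i : 'I_n) : ncpoly :=
  padd (pgen i) (if eps i then pone else pzero).

(* Linear maps on A_Lambda = Z_2^n (basis q_1..q_n) are matrices acting on
   row vectors: v |-> v *m M, M i k = coefficient of q_k in the image of q_i. *)

Definition lin_diff (d : 'I_n -> ncpoly) (eps : 'I_n -> bool) : 'M['F_2]_n :=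
  \matrix_(i, k)
    ((coef (subst (phi_eps eps) (deriv d (subst (phi_eps_inv eps) (pgen i))))
           [:: k] : nat)%:R).

(* elementary automorphism (j, u) : q_j |-> q_j + u, q_i |-> q_i (i <> j) *)
Definition elementary (N : nat) (deg : 'I_n -> int) (e : 'I_n * ncpoly) : Prop :=
  (forall w, coef e.2 w -> e.1 \notin w) /\ homog N deg (deg e.1) e.2.

Definition semimonotonic_elem (R : realFieldType) (h : 'I_n -> R)
  (e : 'I_n * ncpoly) : Prop :=
  forall w, coef e.2 w -> forall i, i \in w -> h i < h e.1.

(* relabeling isomorphism q_i |-> q_{sigma i}, graded *)
Definition relabeling (N : nat) (deg : 'I_n -> int) (sigma : {perm 'I_n}) : Prop :=
  forall i, (deg (sigma i) == deg i %[mod N%:Z])%Z.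

(* induced linear map of an elementary automorphism q_j |-> q_j + u:
   q_j |-> q_j + sum_{words q_{i_1}..q_{i_k} of u} sum_l
                 (prod_{m <> l} eps(q_{i_m})) q_{i_l} *)
Definition elem_lin (eps : 'I_n -> bool) (j : 'I_n) (u : ncpoly) : 'M['F_2]_n :=
  1%:M + \matrix_(i, k)
    (if i == j then
       \sum_(w <- u) \sum_(l < size w)
          ((\prod_(m < size w | m != l) ((eps (nth j w m) : nat)%:R))
           * ((nth j w l == k : nat)%:R))
     else 0).

(* augmentation of the target DGA of q_j |-> q_j + u : eps o phi^{-1},
   where phi^{-1}(q_j) = q_j + u over Z_2 *)
Definition push_aug (eps : 'I_n -> bool) (j : 'I_n) (u : ncpoly) : 'I_n -> bool :=
  fun i => if i == j then eps j (+) aug eps u else eps i.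

(* induced linear map of the composition e_1, then e_2, ...
   (row-vector convention: first map is the leftmost factor) *)
Fixpoint tame_lin_elems (eps : 'I_n -> bool) (es : seq ('I_n * ncpoly))
  : 'M['F_2]_n :=
  match es with
  | [::] => 1%:M
  | e :: es' => elem_lin eps e.1 e.2 *m tame_lin_elems (push_aug eps e.1 e.2) es'
  end.

Definition tame_lin (eps : 'I_n -> bool) (es : seq ('I_n * ncpoly))
  (sigma : {perm 'I_n}) : 'M['F_2]_n :=
  tame_lin_elems eps es *m perm_mx sigma.

Definition inA (R : realFieldType) (h : 'I_n -> R) (t : R) (v : 'rV['F_2]_n)
  : Prop := forall i, v 0 i != 0 -> h i <= t.

Definition homogv (N : nat) (deg : 'I_n -> int) (k : int) (v : 'rV['F_2]_n)
  : Prop := forall i, v 0 i != 0 -> (deg i == k %[mod N%:Z])%Z.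

End FreeAlg.

(* Over F_2 an entry of a matrix product is nonzero only along a path i -> m -> k
   of nonzero entries, so "entries never go up in height" and "entries shift the
   degree by s" are closed under products and pass to the persistence and grading
   conditions on row vectors.  The linearized differential D has as entries the
   linear coefficients of phi^eps(d q_i); since eps kills the image of d,
   linearization obeys a chain rule and d^2 = 0 gives D^2 = 0.  A word contributing
   to the coefficient of q_k has the form w1 q_k w2 with all letters of w1, w2
   augmented, hence of degree 0 and of positive height, which bounds the height and
   degree of D.  The map induced by q_j |-> q_j + u is 1 + U, with U the linear part
   of u placed in row j; as q_j does not occur in u, U^2 = 0 and 1 + U is an
   involution.  It is filtered by semimonotonicity and degree preserving because the
   augmentation pushed along it is again supported in degree 0.  Hence L is a
   filtered, graded isomorphism and conjugating D by it gives the result. *)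

From mathcomp Require Import all_boot all_order all_fingroup all_algebra.
From mathcomp Require Import ring.

Set Implicit Arguments.
Unset Strict Implicit.
Unset Printing Implicit Defensive.
Import Order.TTheory GRing.Theory Num.Theory.
Local Open Scope ring_scope.

Lemma F2_natr_odd m : m%:R = (odd m)%:R :> 'F_2.
Proof. by rewrite -modn2 Fp_nat_mod. Qed.

Lemma F2_pchar : 2 \in [pchar 'F_2].
Proof. exact: pchar_Fp. Qed.

Lemma sumr_neq0_ex (V : nmodType) (I : eqType) (r : seq I) (F : I -> V) :
  \sum_(i <- r) F i != 0 -> exists2 i, i \in r & F i != 0.
Proof.
move=> nz; apply/hasP; apply: contraNT nz => /hasPn F0.
by rewrite big1_seq // => i /andP[_ /F0 /negPn /eqP].
Qed.

Lemma mulr_neq0_factors (S : pzSemiRingType) (x y : S) :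
  x * y != 0 -> x != 0 /\ y != 0.
Proof.
by have [->|] := eqVneq x 0; have [->|] := eqVneq y 0; rewrite ?mul0r ?mulr0 ?eqxx.
Qed.

Lemma addr_neq0 (V : nmodType) (x y : V) : x + y != 0 -> x != 0 \/ y != 0.
Proof. by have [->|] := eqVneq x 0; [rewrite add0r; right | left]. Qed.

Lemma sum_F2_undup n (p : ncpoly n) (f : word n -> 'F_2) :
  \sum_(w <- p) f w = \sum_(w <- undup p) (coef p w)%:R * f w.
Proof.
rewrite -big_undup_iterop_count; apply: eq_bigr => w _.
by rewrite Monoid.iteropE iter_addr_0 -[LHS]mulr_natl F2_natr_odd.
Qed.

Lemma sum_F2_neq0 n (p : ncpoly n) (f : word n -> 'F_2) :
  \sum_(w <- p) f w != 0 -> exists2 w, coef p w & f w != 0.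
Proof.
rewrite sum_F2_undup => /sumr_neq0_ex[w _ /mulr_neq0_factors[cw fw]].
by exists w => //; move: cw; case: coef.
Qed.

Lemma sum_F2_peq n (p q : ncpoly n) (f : word n -> 'F_2) :
  peq p q -> \sum_(w <- p) f w = \sum_(w <- q) f w.
Proof.
move=> pq; apply/eqP; rewrite -subr_eq0 (oppr_pchar2 F2_pchar) -big_cat.
rewrite sum_F2_undup big1 // => w _.
by rewrite /coef count_cat oddD -!/(coef _ _) pq addbb mul0r.
Qed.

Lemma pmul_cons n (u : word n) p q :
  pmul (u :: p) q = [seq u ++ v | v <- q] ++ pmul p q.
Proof. by []. Qed.

Lemma pmulp1 n (p : ncpoly n) : pmul p (pone n) = p.
Proof. by elim: p => //= u p IHp; rewrite pmul_cons /= cats0 IHp. Qed.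

Lemma pmulp0 n (p : ncpoly n) : pmul p (pzero n) = pzero n.
Proof. by elim: p. Qed.

Lemma count_pmul n (P : pred (word n)) p q :
  count P (pmul p q) = (\sum_(u <- p) count (fun v => P (u ++ v)) q)%N.
Proof.
by elim: p => [|u p IHp]; rewrite ?big_nil ?big_cons // pmul_cons count_cat count_map IHp.
Qed.

Lemma deriv_cat n (d : 'I_n -> ncpoly n) p q :
  deriv d (p ++ q) = deriv d p ++ deriv d q.
Proof. by rewrite /deriv map_cat flatten_cat. Qed.

Lemma deriv_seq1 n (d : 'I_n -> ncpoly n) w : deriv d [:: w] = deriv_word d w.
Proof. by rewrite /deriv /= cats0. Qed.

Lemma deriv_pgen n (d : 'I_n -> ncpoly n) i : deriv d (pgen i) = d i.
Proof. by rewrite deriv_seq1 /= /padd pmulp1 pmulp0 cats0. Qed.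

Lemma subst_pgen n (f : 'I_n -> ncpoly n) i : subst f (pgen i) = f i.
Proof. by rewrite /subst /= cats0 pmulp1. Qed.

Lemma deriv_phi_eps_inv n (d : 'I_n -> ncpoly n) eps i :
  deriv d (phi_eps_inv eps i) = d i.
Proof.
by rewrite /phi_eps_inv /padd deriv_cat deriv_pgen; case: (eps i); rewrite /deriv /= ?cats0.
Qed.

Section Linearization.
Variables (n : nat) (eps : 'I_n -> bool).

Fixpoint lin_word (w : word n) (k : 'I_n) : 'F_2 :=
  if w is a :: w' then (a == k)%:R * (all eps w')%:R + (eps a)%:R * lin_word w' k
  else 0.

Definition lin_part (p : ncpoly n) (k : 'I_n) : 'F_2 := \sum_(w <- p) lin_word w k.

Lemma natr_aug p : (aug eps p)%:R = \sum_(w <- p) (all eps w)%:R :> 'F_2.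
Proof.
rewrite /aug -F2_natr_odd.
by elim: p => [|u p IHp]; rewrite ?big_nil ?big_cons //= natrD IHp.
Qed.

Lemma lin_word_cat u v k :
  lin_word (u ++ v) k = (all eps u)%:R * lin_word v k + (all eps v)%:R * lin_word u k.
Proof.
elim: u => [|a u IHu] /=; first by rewrite mul1r mulr0 addr0.
by rewrite IHu all_cat -!mulnb !natrM; ring.
Qed.

Lemma lin_part_cat p q k : lin_part (p ++ q) k = lin_part p k + lin_part q k.
Proof. exact: big_cat. Qed.

Lemma lin_part_pmul p q k :
  lin_part (pmul p q) k = (aug eps p)%:R * lin_part q k + (aug eps q)%:R * lin_part p k.
Proof.
rewrite !natr_aug /lin_part big_allpairs_dep /=.
under eq_bigr do rewrite (eq_bigr _ (fun v _ => lin_word_cat _ v k)) big_split /=.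
rewrite big_split /=; congr (_ + _).
  by rewrite mulr_suml; apply: eq_bigr => u _; rewrite mulr_sumr.
by rewrite mulr_sumr; apply: eq_bigr => u _; rewrite mulr_suml.
Qed.

Lemma count_nil_subst_word w :
  count_mem [::] (subst_word (phi_eps eps) w) = all eps w.
Proof.
elim: w => [|a w IHw] //=.
rewrite count_pmul /phi_eps /padd big_cat big_seq1 /=.
rewrite (eq_count (a2 := pred0)) // count_pred0 add0n.
by case: (eps a); rewrite /= ?big_seq1 ?big_nil ?IHw.
Qed.

Lemma count_letter_subst_word w k :
  (count_mem [:: k] (subst_word (phi_eps eps) w))%:R = lin_word w k.
Proof.
elim: w => [|a w IHw] //=.
rewrite count_pmul /phi_eps /padd big_cat big_seq1 /=.
rewrite (eq_count (a2 := fun v => (a == k) && (v == [::]))); last first.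
  by move=> v; rewrite eqseq_cons.
have -> : count (fun v => (a == k) && (v == [::])) (subst_word (phi_eps eps) w)
          = ((a == k) * all eps w)%N.
  by case: (a == k); rewrite /= ?count_pred0 // mul1n count_nil_subst_word.
by case: (eps a); rewrite /= ?big_seq1 ?big_nil natrD natrM ?IHw ?mul1r ?mul0r ?addr0.
Qed.

Lemma coef_letter_subst p k :
  (coef (subst (phi_eps eps) p) [:: k])%:R = lin_part p k.
Proof.
rewrite -F2_natr_odd /subst /lin_part.
elim: p => [|w p IHp]; rewrite ?big_nil ?big_cons //=.
by rewrite count_cat natrD IHp count_letter_subst_word.
Qed.

Lemma lin_word_neq0 w k : lin_word w k != 0 ->
  exists w1 w2, [/\ w = w1 ++ k :: w2, all eps w1 & all eps w2].
Proof.
elim: w => [|a w IHw] //=.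
have [/andP[/eqP <- ew] _|not_ak] := boolP ((a == k) && all eps w).
  by exists [::], w.
rewrite -natrM mulnb (negbTE not_ak) add0r => /mulr_neq0_factors[ea /IHw].
move=> [w1 [w2 [-> e1 e2]]]; exists (a :: w1), w2.
by move: ea; rewrite /= e1; case: (eps a).
Qed.

Lemma lin_part_neq0 p k : lin_part p k != 0 ->
  exists w1 w2, [/\ coef p (w1 ++ k :: w2), all eps w1 & all eps w2].
Proof.
by move=> /sum_F2_neq0[w cw /lin_word_neq0[w1 [w2 [ew e1 e2]]]]; exists w1, w2; rewrite -ew.
Qed.

Lemma natr_all_prod j w :
  (all eps w)%:R = \prod_(m < size w) (eps (nth j w m))%:R :> 'F_2.
Proof. by elim: w => [|a w IHw]; rewrite ?big_ord0 // big_ord_recl -IHw -natrM mulnb. Qed.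

Lemma lin_wordE j w k : lin_word w k =
  \sum_(l < size w) (\prod_(m < size w | m != l) (eps (nth j w m))%:R) * (nth j w l == k)%:R.
Proof.
elim: w => [|a w IHw] /=; first by rewrite big_ord0.
rewrite big_ord_recl IHw mulr_sumr; congr (_ + _).
  by rewrite big_mkcond big_ord_recl /= mul1r (natr_all_prod j) mulrC.
apply: eq_bigr => l _; rewrite [in RHS]big_mkcond big_ord_recl /= mulrA.
congr (_ * _ * _); rewrite big_mkcond; apply: eq_bigr => m _.
by rewrite (inj_eq lift_inj).
Qed.

End Linearization.

Lemma lin_diffE n (d : 'I_n -> ncpoly n) eps i k :
  lin_diff d eps i k = lin_part eps (d i) k.
Proof. by rewrite mxE subst_pgen deriv_phi_eps_inv coef_letter_subst. Qed.

Section ChainRule.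
Variables (n : nat) (eps : 'I_n -> bool) (d : 'I_n -> ncpoly n).
Hypothesis aug_deriv : forall p, aug eps (deriv d p) = false.

Lemma lin_part_deriv_word w k :
  lin_part eps (deriv_word d w) k = \sum_j lin_word eps w j * lin_part eps (d j) k.
Proof.
elim: w => [|a w IHw].
  by rewrite /lin_part big_nil big1 // => j _; rewrite mul0r.
have aug_da : (aug eps (d a))%:R = 0 :> 'F_2 by rewrite -(deriv_pgen d) aug_deriv.
have aug_dw : (aug eps (deriv_word d w))%:R = 0 :> 'F_2.
  by rewrite -deriv_seq1 aug_deriv.
rewrite /= /padd lin_part_cat !lin_part_pmul aug_da aug_dw !mul0r !add0r addr0 IHw.
rewrite /aug /pgen /= andbT !addn0 !oddb.
under [RHS]eq_bigr do rewrite mulrDl.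
rewrite big_split /=; congr (_ + _); last first.
  by rewrite mulr_sumr; apply: eq_bigr => j _; rewrite mulrA.
rewrite (bigD1 a) //= eqxx mul1r big1 ?addr0 // => j.
by rewrite eq_sym => /negbTE ->; rewrite !mul0r.
Qed.

Lemma lin_part_deriv p k :
  lin_part eps (deriv d p) k = \sum_j lin_part eps p j * lin_part eps (d j) k.
Proof.
rewrite /deriv {1}/lin_part big_flatten big_map /=.
under eq_bigr do rewrite -/(lin_part eps _ k) lin_part_deriv_word.
by rewrite exchange_big /=; apply: eq_bigr => j _; rewrite /lin_part mulr_suml.
Qed.

Lemma lin_diff_sqr : (forall p, peq (deriv d (deriv d p)) (pzero n)) ->
  lin_diff d eps *m lin_diff d eps = 0.
Proof.
move=> dd0; apply/matrixP => i k; rewrite !mxE.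
under eq_bigr do rewrite !lin_diffE.
by rewrite -lin_part_deriv -(deriv_pgen d i) /lin_part (sum_F2_peq _ (dd0 _)) big_nil.
Qed.

End ChainRule.

Lemma mulmx_neq0 (S : pzSemiRingType) m n p (A : 'M[S]_(m, n)) (B : 'M[S]_(n, p)) i k :
  (A *m B) i k != 0 -> exists j, A i j != 0 /\ B j k != 0.
Proof. by rewrite mxE => /sumr_neq0_ex[j _ /mulr_neq0_factors]; exists j. Qed.

Lemma invmx_eq (S : comUnitRingType) n (M X : 'M[S]_n) : M *m X = 1%:M -> invmx M = X.
Proof.
move=> MX; have [Mu _] := mulmx1_unit MX.
by rewrite -[invmx M]mulmx1 -MX mulmxA mulVmx // mul1mx.
Qed.

Lemma sqr_conj_invmx (S : comUnitRingType) n (L D : 'M[S]_n) :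
  L \in unitmx -> D *m D = 0 -> (invmx L *m D *m L) *m (invmx L *m D *m L) = 0.
Proof. by move=> Lu DD; rewrite !mulmxA mulmxK // -(mulmxA _ D D) DD mulmx0 mul0mx. Qed.

Lemma mulmx_conj_invmx (S : comUnitRingType) n (L D : 'M[S]_n) :
  L \in unitmx -> L *m (invmx L *m D *m L) = D *m L.
Proof. by move=> Lu; rewrite !mulmxA mulmxV // mul1mx. Qed.

Section SupportConditions.
Variables (R : realFieldType) (n N : nat) (deg : 'I_n -> int) (h : 'I_n -> R).

Definition filtered_mx (M : 'M['F_2]_n) := forall i k, M i k != 0 -> h k <= h i.

Definition graded_mx (s : int) (M : 'M['F_2]_n) :=
  forall i k, M i k != 0 -> (deg k = deg i + s %[mod N%:Z])%Z.

Lemma filtered_mx1 : filtered_mx 1%:M.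
Proof. by move=> i k; rewrite mxE; case: (i =P k) => [->|_]; rewrite ?lexx ?mulr0n ?eqxx. Qed.

Lemma graded_mx1 : graded_mx 0 1%:M.
Proof. by move=> i k; rewrite mxE addr0; case: (i =P k) => [->|_]; rewrite ?mulr0n ?eqxx. Qed.

Lemma filtered_mxM A B : filtered_mx A -> filtered_mx B -> filtered_mx (A *m B).
Proof. by move=> fA fB i k /mulmx_neq0[j [/fA hj /fB hk]]; exact: le_trans hk hj. Qed.

Lemma graded_mxM s t A B : graded_mx s A -> graded_mx t B -> graded_mx (s + t) (A *m B).
Proof.
move=> gA gB i k /mulmx_neq0[j [/gA dj /gB ->]].
by rewrite -modzDml dj modzDml addrA.
Qed.

Lemma filtered_perm_mx (s : {perm 'I_n}) :
  (forall i, h (s i) = h i) -> filtered_mx (perm_mx s).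
Proof.
by move=> hs i k; rewrite !mxE; case: (s i =P k) => [<- _|_]; rewrite ?hs ?lexx ?mulr0n ?eqxx.
Qed.

Lemma graded_perm_mx (s : {perm 'I_n}) : relabeling N deg s -> graded_mx 0 (perm_mx s).
Proof.
move=> ds i k; rewrite !mxE addr0.
by case: (s i =P k) => [<- _|_]; [apply/eqP | rewrite mulr0n eqxx].
Qed.

Lemma inA_mulmx M t v : filtered_mx M -> inA h t v -> inA h t (v *m M).
Proof. by move=> fM vt k /mulmx_neq0[j [/vt hj /fM hk]]; exact: le_trans hk hj. Qed.

Lemma homogv_mulmx M s k v :
  graded_mx s M -> homogv N deg k v -> homogv N deg (k + s) (v *m M).
Proof.
move=> gM vk i /mulmx_neq0[j [/vk /eqP dj /gM ->]].
by rewrite -modzDml dj modzDml.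
Qed.

Definition filtered_graded_iso (M : 'M['F_2]_n) :=
  [/\ M \in unitmx, filtered_mx M, filtered_mx (invmx M),
      graded_mx 0 M & graded_mx 0 (invmx M)].

Lemma filtered_graded_isoM A B :
  filtered_graded_iso A -> filtered_graded_iso B -> filtered_graded_iso (A *m B).
Proof.
move=> [uA fA fA' gA gA'] [uB fB fB' gB gB']; rewrite /filtered_graded_iso.
have -> : invmx (A *m B) = invmx B *m invmx A.
  by apply: invmx_eq; rewrite mulmxA -(mulmxA A) mulmxV // mulmx1 mulmxV.
split; rewrite ?unitmx_mul ?uA ?uB //; try exact: filtered_mxM.
- by rewrite -[0]addr0; exact: graded_mxM.
- by rewrite -[0]addr0; exact: graded_mxM.
Qed.

Lemma filtered_graded_iso_invol M : M *m M = 1%:M ->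
  filtered_mx M -> graded_mx 0 M -> filtered_graded_iso M.
Proof.
move=> MM fM gM; have [Mu _] := mulmx1_unit MM.
by rewrite /filtered_graded_iso (invmx_eq MM).
Qed.

Lemma filtered_graded_iso1 : filtered_graded_iso 1%:M.
Proof. exact: filtered_graded_iso_invol (mulmx1 _) filtered_mx1 graded_mx1. Qed.

Lemma filtered_graded_iso_perm (s : {perm 'I_n}) :
  relabeling N deg s -> (forall i, h (s i) = h i) -> filtered_graded_iso (perm_mx s).
Proof.
move=> ds hs; have hs' i : h ((s^-1)%g i) = h i by rewrite -{2}(permKV s i) hs.
have ds' : relabeling N deg (s^-1)%g.
  by move=> i; rewrite -{2}(permKV s i) eq_sym; exact: ds.
rewrite /filtered_graded_iso; have -> : invmx (perm_mx s) = perm_mx (s^-1)%g :> 'M['F_2]_n.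
  by apply: invmx_eq; rewrite -perm_mxM mulgV perm_mx1.
split; [exact: unitmx_perm | exact: filtered_perm_mx | exact: filtered_perm_mx
       | exact: graded_perm_mx | exact: graded_perm_mx].
Qed.

End SupportConditions.

Section InducedMaps.
Variables (R : realFieldType) (n N : nat) (deg : 'I_n -> int) (h : 'I_n -> R).

Definition aug_deg0 (eps : 'I_n -> bool) := forall i, eps i -> (deg i = 0 %[mod N%:Z])%Z.

Lemma wdeg_aug_deg0 eps w : aug_deg0 eps -> all eps w -> (wdeg deg w = 0 %[mod N%:Z])%Z.
Proof.
move=> e0; elim: w => [|a w IHw]; first by rewrite /wdeg big_nil.
move=> /andP[ea ew].
by rewrite /wdeg big_cons -modzDml (e0 _ ea) -modzDmr -/(wdeg deg w) (IHw ew) !mod0z.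
Qed.

Lemma wdeg_cat_letter eps w1 k w2 : aug_deg0 eps -> all eps w1 -> all eps w2 ->
  (wdeg deg (w1 ++ k :: w2) = deg k %[mod N%:Z])%Z.
Proof.
move=> e0 /(wdeg_aug_deg0 e0) d1 /(wdeg_aug_deg0 e0) d2.
rewrite /wdeg big_cat big_cons /= -!/(wdeg _ _).
by rewrite -modzDml d1 mod0z add0r -modzDmr d2 mod0z addr0.
Qed.

Lemma elem_linE eps j u : elem_lin eps j u =
  1%:M + \matrix_(i, k) (if i == j then lin_part eps u k else 0) :> 'M_n.
Proof.
congr (_ + _); apply/matrixP => i k; rewrite !mxE; case: (i == j) => //.
by apply: eq_bigr => w _; rewrite (lin_wordE eps j).
Qed.

Lemma elem_lin_neq0 eps j (u : ncpoly n) i k : elem_lin eps j u i k != 0 -> i = k \/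
  i = j /\ exists w1 w2, [/\ coef u (w1 ++ k :: w2), all eps w1 & all eps w2].
Proof.
rewrite elem_linE !mxE => /addr_neq0[|].
  by case: (i =P k) => [->|_]; [left | rewrite mulr0n eqxx].
by case: (i =P j) => [->|//] /lin_part_neq0 wk; right.
Qed.

Lemma elem_lin_invol eps j u : elementary N deg (j, u) ->
  elem_lin eps j u *m elem_lin eps j u = 1%:M.
Proof.
move=> [j_notin _]; rewrite elem_linE; set U := \matrix_(i, k) _.
have Ujj : lin_part eps u j = 0.
  apply/eqP; apply: contraT => /lin_part_neq0[w1 [w2 [cw _ _]]].
  by have := j_notin _ cw; rewrite /= mem_cat mem_head orbT.
have UU : U *m U = 0.
  apply/matrixP => i k; rewrite !mxE big1 // => m _; rewrite !mxE.
  case: (i == j); last by rewrite mul0r.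
  by case: ifP => [/eqP ->|_]; rewrite ?Ujj ?mul0r ?mulr0.
have UU2 : U + U = 0 by apply/matrixP => i k; rewrite !mxE (addrr_pchar2 F2_pchar).
by rewrite mulmxDl !mulmxDr !mul1mx mulmx1 UU addr0 -addrA UU2 addr0.
Qed.

Lemma elem_lin_filtered eps j u :
  semimonotonic_elem h (j, u) -> filtered_mx h (elem_lin eps j u).
Proof.
move=> sm i k /elem_lin_neq0[-> //|[-> [w1 [w2 [cw _ _]]]]].
by apply/ltW/(sm _ cw); rewrite mem_cat mem_head orbT.
Qed.

Lemma elem_lin_graded eps j u : aug_deg0 eps -> elementary N deg (j, u) ->
  graded_mx N deg 0 (elem_lin eps j u).
Proof.
move=> e0 [_ hu] i k /elem_lin_neq0[-> | [-> [w1 [w2 [cw e1 e2]]]]]; rewrite addr0 //.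
by rewrite -(wdeg_cat_letter k e0 e1 e2); apply/eqP/hu.
Qed.

Lemma aug_deg0_push eps j u : aug_deg0 eps -> elementary N deg (j, u) ->
  aug_deg0 (push_aug eps j u).
Proof.
move=> e0 [_ hu] i; rewrite /push_aug; case: (i =P j) => [->|_ /e0 //].
case: (boolP (eps j)) => [/e0 //|_] /= augu.
have : (aug eps u)%:R != 0 :> 'F_2 by rewrite augu.
rewrite natr_aug => /sum_F2_neq0[w cw ew].
have ew' : all eps w by move: ew; case: all.
by rewrite -(wdeg_aug_deg0 e0 ew'); apply/esym/eqP/hu.
Qed.

Lemma tame_lin_elems_iso eps es : aug_deg0 eps ->
  (forall e, e \in es -> elementary N deg e) ->
  (forall e, e \in es -> semimonotonic_elem h e) ->
  filtered_graded_iso N deg h (tame_lin_elems eps es).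
Proof.
elim: es eps => [|[j u] es IHes] eps e0 el sm /=; first exact: filtered_graded_iso1.
have el0 := el _ (mem_head _ _); have sm0 := sm _ (mem_head _ _).
apply: filtered_graded_isoM.
  apply: filtered_graded_iso_invol; first exact: elem_lin_invol.
    exact: elem_lin_filtered.
  exact: elem_lin_graded.
apply: IHes => [|e ees|e ees]; first exact: aug_deg0_push.
  by apply: el; rewrite inE ees orbT.
by apply: sm; rewrite inE ees orbT.
Qed.

Lemma lin_diff_filtered d eps : is_filtered h d -> filtered_mx h (lin_diff d eps).
Proof.
move=> [h_pos dh] i k; rewrite lin_diffE => /lin_part_neq0[w1 [w2 [cw _ _]]].
have := dh (pgen i) (w1 ++ k :: w2); rewrite deriv_pgen => /(_ cw)[w'].
rewrite /coef /= addn0 oddb => /eqP <-.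
rewrite /hword big_cat big_cons big_seq1 /= => lt.
have h_ge0 v : 0 <= \sum_(a <- v) h a by apply: sumr_ge0 => a _; exact: ltW.
by apply/ltW/(le_lt_trans _ lt); rewrite addrCA lerDl addr_ge0.
Qed.

Lemma lin_diff_graded d eps : is_DGA N deg d -> aug_deg0 eps ->
  graded_mx N deg (-1) (lin_diff d eps).
Proof.
move=> [dd _] e0 i k; rewrite lin_diffE => /lin_part_neq0[w1 [w2 [cw e1 e2]]].
by rewrite -(wdeg_cat_letter k e0 e1 e2); apply/eqP/dd.
Qed.

End InducedMaps.

Unset Implicit Arguments.

Theorem lemma4p2 (R : realFieldType) (n N : nat) (deg : 'I_n -> int)
  (h : 'I_n -> R) (d : 'I_n -> ncpoly n) (eps : 'I_n -> bool)
  (es : seq ('I_n * ncpoly n)) (sigma : {perm 'I_n}) :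
  is_DGA N deg d ->
  is_filtered h d ->
  is_augmentation N deg d eps ->
  (forall e, e \in es -> elementary N deg e) ->
  relabeling N deg sigma ->
  (* semimonotonic *)
  (forall e, e \in es -> semimonotonic_elem h e) ->
  (forall i, h (sigma i) = h i) ->
  let L := tame_lin eps es sigma in
  let D := lin_diff d eps in
  let D' := invmx L *m D *m L in
  (* (A^., D') is a persistence module of chain complexes *)
  ((forall t v, inA h t v -> inA h t (v *m D')) /\
   D' *m D' = 0 /\
   (forall k v, homogv N deg k v -> homogv N deg (k - 1) (v *m D'))) /\
  (* L induces an isomorphism of persistence modules of chain complexes *)
  (L \in unitmx /\
   (forall t v, inA h t v -> inA h t (v *m L)) /\
   (forall t v, inA h t v -> inA h t (v *m invmx L)) /\
   (forall k v, homogv N deg k v -> homogv N deg k (v *m L)) /\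
   (forall k v, homogv N deg k v -> homogv N deg k (v *m invmx L)) /\
   D *m L = L *m D').
Proof.
move=> dga filt augm elem rel semi h_sigma L D D'.
have eps0 : aug_deg0 N deg eps by move=> i /augm.1/eqP.
have [Lu fL fL' gL gL'] : filtered_graded_iso N deg h L.
  exact: filtered_graded_isoM (tame_lin_elems_iso eps0 elem semi)
                              (filtered_graded_iso_perm rel h_sigma).
have fD' : filtered_mx h D'.
  exact: filtered_mxM (filtered_mxM fL' (lin_diff_filtered filt)) fL.
have gD' : graded_mx N deg (-1) D'.
  by have := graded_mxM (graded_mxM gL' (lin_diff_graded dga eps0)) gL; rewrite add0r addr0.
have homogv_deg0 M k v : graded_mx N deg 0 M -> homogv N deg k v -> homogv N deg k (v *m M).
  by move=> gM /(homogv_mulmx gM); rewrite addr0.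
repeat split => //.
- by move=> t v; apply: inA_mulmx.
- exact: sqr_conj_invmx Lu (lin_diff_sqr augm.2 dga.2).
- by move=> k v /(homogv_mulmx gD').
- by move=> t v; apply: inA_mulmx.
- by move=> t v; apply: inA_mulmx.
- by move=> k v; apply: homogv_deg0.
- by move=> k v; apply: homogv_deg0.
- by rewrite mulmx_conj_invmx.
Qed.
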